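(* Let $G=(X,\Sigma,\longrightarrow,X_0)$ and $R=(Z,\Sigma,\longrightarrow,Z_0)$ be automata and $S=(Y,\Sigma,\longrightarrow,Y_0)\in\mathit{SPR}(G,R)$. Then $S\|G\sqsubseteq\mathcal{A}(E)\|G$ for some $\Sigma_{ucr}$-controllability set $E$ from $G$ to $R$. In particular, for any cc-simulation $\Phi$ from $S\|G$ to $R$, $S\|G\sqsubseteq\mathcal{A}(E(\Phi))\|G$, where $E(\Phi)=\{\theta_y:y\in Y\}$ and $\theta_y=\{(x,z):((y,x),z)\in\Phi\text{ and }(y,x)\text{ is reachable in }S\|G\}$.
   Context: An automaton is a 4-tuple $A=(Q,\Sigma,\longrightarrow,Q_0)$ with state set $Q$, finite event set $\Sigma$, ${\longrightarrow}\subseteq Q\times\Sigma\times Q$ and $\emptyset\neq Q_0\subseteq Q$. Write $q\xrightarrow{\sigma}q'$ for $(q,\sigma,q')\in{\longrightarrow}$, $q\xrightarrow{\sigma}$ if some such $q'$ exists; extend to strings. A state is reachable if reached from an initial state by some string. Events are partitioned into uncontrollable $\Sigma_{uc}$ and controllable $\Sigma_c$; $\Sigma_r\subseteq\Sigma$ is a fixed set of required events. $S\|G=(Y\times X,\Sigma,\longrightarrow,Y_0\times X_0)$ with $(y,x)\xrightarrow{\sigma}(y',x')$ iff $y\xrightarrow{\sigma}y'$ and $x\xrightarrow{\sigma}x'$ (similarly for any automaton in place of $S$). $S$ is $\Sigma_{uc}$-admissible w.r.t. $G$ if for every reachable $(y,x)$ of $S\|G$ and $\sigma\in\Sigma_{uc}$,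 $x\xrightarrow{\sigma}$ implies $(y,x)\xrightarrow{\sigma}$. For automata $A_1,A_2$ (state sets $Q_1,Q_2$, initial sets $Q_{01},Q_{02}$), $\Phi\subseteq Q_1\times Q_2$ is a simulation if (initial state) every $q_0\in Q_{01}$ has $p_0\in Q_{02}$ with $(q_0,p_0)\in\Phi$ and (forward) for $(q,p)\in\Phi$, $\sigma\in\Sigma$, $q\xrightarrow{\sigma}q'$ there is $p'$ with $p\xrightarrow{\sigma}p'$, $(q',p')\in\Phi$; a cc-simulation if moreover ($\Sigma_r$-backward) for $(q,p)\in\Phi$, $\sigma\in\Sigma_r$, $p\xrightarrow{\sigma}p'$ there is $q'$ with $q\xrightarrow{\sigma}q'$, $(q',p')\in\Phi$. $A_1\sqsubseteq A_2$, $A_1\sqsubseteq_{cc}A_2$ mean such relations exist. $\mathit{SPR}(G,R)$ is the set of $\Sigma_{uc}$-admissible supervisors $S$ with $S\|G\sqsubseteq_{cc}R$. For $W,W'\subseteq X\times Z$: $\mathit{match}_{G,R}(W,\sigma,W')$ iff for all $(x,z)\in W$ and $x\xrightarrow{\sigma}x'$ there is $z'$ with $z\xrightarrow{\sigma}z'$ and $(x',z')\in W'$. $E\subseteq\wp(X\times Z)$ is a $\Sigma_{ucr}$-controllability set from $G$ to $R$ if: (istate) some $W_0\in E$ satisfies $\forall x_0\in X_0\,\exists z_0\in Z_0\,((x_0,z_0)\in W_0)$; (a) for every $W\in E$, $\sigma\in\Sigma_{uc}$ there is $W'\in E$ with $\mathit{match}_{G,R}(W,\sigma,W')$; (b) for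 every $W\in E$, $(x,z)\in W$, $\sigma\in\Sigma_r$, $z\xrightarrow{\sigma}z'$, there exist $x'$, $W'\in E$ with $x\xrightarrow{\sigma}x'$, $(x',z')\in W'$, $\mathit{match}_{G,R}(W,\sigma,W')$. For any $E\subseteq\wp(X\times Z)$, $E^*=\bigcup_{\widetilde W\in E}\wp(\widetilde W)$, $\mathrm{Succ}_\sigma(W)=\bigcup_{(x,z)\in W}\{x':x\xrightarrow{\sigma}x'\}\times\{z':z\xrightarrow{\sigma}z'\}$, and $\mathcal{A}(E)=(E^*,\Sigma,\longrightarrow,I_E)$ with $I_E=\{W_0\in E^*:\forall x_0\in X_0\,\exists z_0\in Z_0\,((x_0,z_0)\in W_0)\text{ and }W_0\subseteq X_0\times Z_0\}$ and $W\xrightarrow{\sigma}W'$ iff (i) there exist $(x,z)\in W$, $(x',z')\in W'$ with $x\xrightarrow{\sigma}x'$, $z\xrightarrow{\sigma}z'$; (ii) $\mathit{match}_{G,R}(W,\sigma,W')$; (iii) $W'\subseteq\mathrm{Succ}_\sigma(W)$. *)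

From Stdlib Require Import List.
Set Implicit Arguments.

Record aut (Sigma Q : Type) := Aut {
  tr : Q -> Sigma -> Q -> Prop;
  init : Q -> Prop
}.

Definition wf_aut (Sigma Q : Type) (A : aut Sigma Q) : Prop := exists q, init A q.

Definition par (Sigma Y X : Type) (S : aut Sigma Y) (G : aut Sigma X) : aut Sigma (Y * X) :=
  {| tr := fun p s p' => tr S (fst p) s (fst p') /\ tr G (snd p) s (snd p');
     init := fun p => init S (fst p) /\ init G (snd p) |}.

Inductive reachable (Sigma Q : Type) (A : aut Sigma Q) : Q -> Prop :=
| reach_init : forall q, init A q -> reachable A q
| reach_step : forall q s q', reachable A q -> tr A q s q' -> reachable A q'.

Definition admissible (Sigma Y X : Type) (Suc : Sigma -> Prop)
  (S : aut Sigma Y) (G : aut Sigma X) : Prop :=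
  forall y x, reachable (par S G) (y, x) ->
  forall s, Suc s -> (exists x', tr G x s x') -> exists q', tr (par S G) (y, x) s q'.

Definition simulation (Sigma Q1 Q2 : Type) (A1 : aut Sigma Q1) (A2 : aut Sigma Q2)
  (Phi : Q1 -> Q2 -> Prop) : Prop :=
  (forall q0, init A1 q0 -> exists p0, init A2 p0 /\ Phi q0 p0) /\
  (forall q p s q', Phi q p -> tr A1 q s q' -> exists p', tr A2 p s p' /\ Phi q' p').

Definition cc_simulation (Sigma Q1 Q2 : Type) (Sr : Sigma -> Prop)
  (A1 : aut Sigma Q1) (A2 : aut Sigma Q2) (Phi : Q1 -> Q2 -> Prop) : Prop :=
  simulation A1 A2 Phi /\
  (forall q p s p', Phi q p -> Sr s -> tr A2 p s p' -> exists q', tr A1 q s q' /\ Phi q' p').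

Definition sim_le (Sigma Q1 Q2 : Type) (A1 : aut Sigma Q1) (A2 : aut Sigma Q2) : Prop :=
  exists Phi, simulation A1 A2 Phi.

Definition cc_le (Sigma Q1 Q2 : Type) (Sr : Sigma -> Prop)
  (A1 : aut Sigma Q1) (A2 : aut Sigma Q2) : Prop :=
  exists Phi, cc_simulation Sr A1 A2 Phi.

Definition SPR (Sigma X Z Y : Type) (Suc Sr : Sigma -> Prop)
  (G : aut Sigma X) (R : aut Sigma Z) (S : aut Sigma Y) : Prop :=
  admissible Suc S G /\ cc_le Sr (par S G) R.

Definition match_GR (Sigma X Z : Type) (G : aut Sigma X) (R : aut Sigma Z)
  (W : X -> Z -> Prop) (s : Sigma) (W' : X -> Z -> Prop) : Prop :=
  forall x z, W x z -> forall x', tr G x s x' -> exists z', tr R z s z' /\ W' x' z'.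

Definition ctrl_set (Sigma X Z : Type) (Suc Sr : Sigma -> Prop)
  (G : aut Sigma X) (R : aut Sigma Z) (E : (X -> Z -> Prop) -> Prop) : Prop :=
  (exists W0, E W0 /\ forall x0, init G x0 -> exists z0, init R z0 /\ W0 x0 z0) /\
  (forall W s, E W -> Suc s -> exists W', E W' /\ match_GR G R W s W') /\
  (forall W x z s z', E W -> W x z -> Sr s -> tr R z s z' ->
     exists x' W', tr G x s x' /\ E W' /\ W' x' z' /\ match_GR G R W s W').

Definition Estar (X Z : Type) (E : (X -> Z -> Prop) -> Prop) (W : X -> Z -> Prop) : Prop :=
  exists Wt, E Wt /\ forall x z, W x z -> Wt x z.

Definition Succ (Sigma X Z : Type) (G : aut Sigma X) (R : aut Sigma Z)
  (s : Sigma) (W : X -> Z -> Prop) (x' : X) (z' : Z) : Prop :=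
  exists x z, W x z /\ tr G x s x' /\ tr R z s z'.

Definition AE (Sigma X Z : Type) (G : aut Sigma X) (R : aut Sigma Z)
  (E : (X -> Z -> Prop) -> Prop) : aut Sigma {W : X -> Z -> Prop | Estar E W} :=
  {| init := fun W =>
       (forall x0, init G x0 -> exists z0, init R z0 /\ proj1_sig W x0 z0) /\
       (forall x z, proj1_sig W x z -> init G x /\ init R z);
     tr := fun W s W' =>
       (exists x z x' z', proj1_sig W x z /\ proj1_sig W' x' z' /\
                          tr G x s x' /\ tr R z s z') /\
       match_GR G R (proj1_sig W) s (proj1_sig W') /\
       (forall x' z', proj1_sig W' x' z' -> Succ G R s (proj1_sig W) x' z') |}.

Definition theta (Sigma X Y Z : Type) (S : aut Sigma Y) (G : aut Sigma X)
  (Phi : Y * X -> Z -> Prop) (y : Y) : X -> Z -> Prop :=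
  fun x z => Phi (y, x) z /\ reachable (par S G) (y, x).

Definition EPhi (Sigma X Y Z : Type) (S : aut Sigma Y) (G : aut Sigma X)
  (Phi : Y * X -> Z -> Prop) : (X -> Z -> Prop) -> Prop :=
  fun W => exists y, W = theta S G Phi y.

From Stdlib Require Import List Classical.
Set Implicit Arguments.
Unset Strict Implicit.

(* Forward simulation by Phi makes theta_y match theta_y' along every transition
   y -s-> y' of S. This gives condition (b) once the Sigma_r-backward clause supplies
   the step of S || G, and condition (a) by admissibility: if y has no s-successor for
   an uncontrollable s, then no x paired with y in theta_y has one either, so theta_y
   matches itself vacuously.
   A state (y, x) of S || G is simulated by (W, x), with W a subset of theta_y
   containing a pair (x, z): initially theta_y cut down to initial states, after an
   s-step the part of theta_y' inside Succ_s(W). *)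

Section ControllabilitySet.

Variables (Sigma X Y Z : Type).
Variables (G : aut Sigma X) (R : aut Sigma Z) (S : aut Sigma Y).
Variable Phi : Y * X -> Z -> Prop.

Local Notation theta := (theta S G Phi).
Local Notation E := (EPhi S G Phi).

Lemma reachable_par_step y x s y' x' :
  reachable (par S G) (y, x) -> tr S y s y' -> tr G x s x' ->
  reachable (par S G) (y', x').
Proof.
  intros Hr Hy Hx. apply reach_step with (y, x) s; [exact Hr | split; assumption].
Qed.

Lemma EPhi_theta y : E (theta y).
Proof. exists y; reflexivity. Qed.

Lemma Estar_EPhi_sub y (W : X -> Z -> Prop) :
  (forall x z, W x z -> theta y x z) -> Estar E W.
Proof. intros HW. exists (theta y). split; [apply EPhi_theta | exact HW]. Qed.

Lemma match_theta y s y' :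
  simulation (par S G) R Phi -> tr S y s y' ->
  match_GR G R (theta y) s (theta y').
Proof.
  intros [_ Hfwd] Hy x z [HPhi Hr] x' Hx.
  destruct (Hfwd (y, x) z s (y', x') HPhi (conj Hy Hx)) as [z' [Hz' HPhi']].
  exists z'. split; [exact Hz' |].
  split; [exact HPhi' | exact (reachable_par_step Hr Hy Hx)].
Qed.

Lemma EPhi_istate :
  wf_aut S -> simulation (par S G) R Phi ->
  exists W0, E W0 /\ forall x0, init G x0 -> exists z0, init R z0 /\ W0 x0 z0.
Proof.
  intros [y0 Hy0] [Hinit _]. exists (theta y0). split; [apply EPhi_theta |].
  intros x0 Hx0. destruct (Hinit (y0, x0) (conj Hy0 Hx0)) as [z0 [Hz0 HPhi]].
  exists z0. split; [exact Hz0 |]. split; [exact HPhi |]. apply reach_init. split; assumption.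
Qed.

Lemma EPhi_uncontrollable (Suc : Sigma -> Prop) :
  admissible Suc S G -> simulation (par S G) R Phi ->
  forall W s, E W -> Suc s -> exists W', E W' /\ match_GR G R W s W'.
Proof.
  intros Hadm Hsim W s [y ->] Hs.
  destruct (classic (exists y', tr S y s y')) as [[y' Hy'] | Hstuck].
  - exists (theta y'). split; [apply EPhi_theta | exact (match_theta Hsim Hy')].
  - exists (theta y). split; [apply EPhi_theta |].
    intros x z [_ Hr] x' Hx. exfalso. apply Hstuck.
    destruct (Hadm y x Hr s Hs (ex_intro _ x' Hx)) as [[y' x''] [Hy' _]].
    exists y'. exact Hy'.
Qed.

Lemma EPhi_required (Sr : Sigma -> Prop) :
  cc_simulation Sr (par S G) R Phi ->
  forall W x z s z', E W -> W x z -> Sr s -> tr R z s z' ->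
  exists x' W', tr G x s x' /\ E W' /\ W' x' z' /\ match_GR G R W s W'.
Proof.
  intros [Hsim Hback] W x z s z' [y ->] [HPhi Hr] Hs Hz.
  destruct (Hback (y, x) z s z' HPhi Hs Hz) as [[y' x'] [[Hy Hx] HPhi']].
  exists x', (theta y'). split; [exact Hx |]. split; [apply EPhi_theta |].
  split; [split; [exact HPhi' | exact (reachable_par_step Hr Hy Hx)] |].
  exact (match_theta Hsim Hy).
Qed.

Lemma ctrl_set_EPhi (Suc Sr : Sigma -> Prop) :
  wf_aut S -> admissible Suc S G -> cc_simulation Sr (par S G) R Phi ->
  ctrl_set Suc Sr G R E.
Proof.
  intros HS Hadm Hcc. pose proof (proj1 Hcc) as Hsim.
  split; [exact (EPhi_istate HS Hsim) |].
  split; [exact (EPhi_uncontrollable Hadm Hsim) | exact (EPhi_required Hcc)].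
Qed.

Definition theta_covers (q : Y * X) (p : {W : X -> Z -> Prop | Estar E W} * X) : Prop :=
  snd p = snd q /\
  (forall x z, proj1_sig (fst p) x z -> theta (fst q) x z) /\
  exists z, proj1_sig (fst p) (snd q) z.

Definition theta_init (y0 : Y) : X -> Z -> Prop :=
  fun x z => init G x /\ init R z /\ theta y0 x z.

Definition theta_succ (s : Sigma) (W : X -> Z -> Prop) (y' : Y) : X -> Z -> Prop :=
  fun x' z' => Succ G R s W x' z' /\ theta y' x' z'.

Section Simulation.

Hypothesis Hsim : simulation (par S G) R Phi.

Lemma theta_covers_init q0 :
  init (par S G) q0 ->
  exists p0, init (par (AE G R E) G) p0 /\ theta_covers q0 p0.
Proof.
  destruct q0 as [y0 x0]. intros [Hy0 Hx0]. simpl in *.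
  assert (Hcover : forall x, init G x -> exists z, init R z /\ theta_init y0 x z).
  { intros x Hx. destruct (proj1 Hsim (y0, x) (conj Hy0 Hx)) as [z [Hz HPhi]].
    exists z. split; [exact Hz |]. split; [exact Hx |]. split; [exact Hz |].
    split; [exact HPhi |]. apply reach_init. split; assumption. }
  assert (HE : Estar E (theta_init y0)).
  { apply Estar_EPhi_sub with y0. intros x z [_ [_ H]]. exact H. }
  exists (exist _ (theta_init y0) HE, x0). simpl. split.
  - split; [| exact Hx0]. split; [exact Hcover |].
    intros x z [Hx [Hz _]]. split; assumption.
  - split; [reflexivity |]. split; [intros x z [_ [_ H]]; exact H |].
    destruct (Hcover x0 Hx0) as [z [_ Hz]]. exists z. exact Hz.
Qed.

Lemma theta_covers_step q p s q' :
  theta_covers q p -> tr (par S G) q s q' ->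
  exists p', tr (par (AE G R E) G) p s p' /\ theta_covers q' p'.
Proof.
  destruct q as [y x], p as [[W HW] x2], q' as [y' x'].
  intros [Hx2 [Hsub [z HWz]]] [Hy Hx]. simpl in *. subst x2.
  destruct (Hsub _ _ HWz) as [HPhi Hr].
  destruct (proj2 Hsim (y, x) z s (y', x') HPhi (conj Hy Hx)) as [z' [Hz' HPhi']].
  assert (HE : Estar E (theta_succ s W y')).
  { apply Estar_EPhi_sub with y'. intros a b [_ H]. exact H. }
  assert (HWz' : theta_succ s W y' x' z').
  { split; [exists x, z; auto |].
    split; [exact HPhi' | exact (reachable_par_step Hr Hy Hx)]. }
  exists (exist _ (theta_succ s W y') HE, x'). simpl. split.
  - split; [| exact Hx]. split; [exists x, z, x', z'; auto |]. split.
    + intros a b HWab a' Ha.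
      destruct (match_theta Hsim Hy (Hsub _ _ HWab) Ha) as [b' [Hb' Htheta]].
      exists b'. split; [exact Hb' |]. split; [exists a, b; auto | exact Htheta].
    + intros a' b' [H _]. exact H.
  - split; [reflexivity |]. split; [intros a b [_ H]; exact H |].
    exists z'. exact HWz'.
Qed.

Lemma sim_le_AE_EPhi : sim_le (par S G) (par (AE G R E) G).
Proof.
  exists theta_covers. split.
  - exact theta_covers_init.
  - intros q p s q' Hcov Hq. exact (theta_covers_step Hcov Hq).
Qed.

End Simulation.

End ControllabilitySet.

Theorem lemma8 (Sigma X Y Z : Type) (Suc Sr : Sigma -> Prop)
  (HSigma_fin : exists l : list Sigma, forall s, In s l)
  (G : aut Sigma X) (R : aut Sigma Z) (S : aut Sigma Y)
  (HG : wf_aut G) (HR : wf_aut R) (HS : wf_aut S)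
  (HSPR : SPR Suc Sr G R S) :
  (exists E, ctrl_set Suc Sr G R E /\ sim_le (par S G) (par (AE G R E) G)) /\
  (forall Phi : Y * X -> Z -> Prop, cc_simulation Sr (par S G) R Phi ->
     ctrl_set Suc Sr G R (EPhi S G Phi) /\
     sim_le (par S G) (par (AE G R (EPhi S G Phi)) G)).
Proof.
  destruct HSPR as [Hadm [Phi0 HPhi0]].
  assert (HEPhi : forall Phi, cc_simulation Sr (par S G) R Phi ->
            ctrl_set Suc Sr G R (EPhi S G Phi) /\
            sim_le (par S G) (par (AE G R (EPhi S G Phi)) G)).
  { intros Phi HPhi. split.
    - exact (ctrl_set_EPhi HS Hadm HPhi).
    - exact (sim_le_AE_EPhi (proj1 HPhi)). }
  split; [exists (EPhi S G Phi0); exact (HEPhi Phi0 HPhi0) | exact HEPhi].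
Qed.
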